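(* Let $n,m\ge 3$ and let $G=P_n\square P_m$ be the grid graph. Every minimal resolving set of $G$ contains two boundary vertices lying on opposite sides of the grid.
   Context: The grid graph $P_n\square P_m$ has vertex set $\{(i,j):0\le i\le n-1,\ 0\le j\le m-1\}$, with $(i,j)$ adjacent to $(k,l)$ iff $|i-k|+|j-l|=1$; distance $d((i,j),(k,l))=|i-k|+|j-l|$. A vertex $w$ resolves $u,v$ if $d(w,u)\ne d(w,v)$; a set $R$ is resolving if every pair of distinct vertices is resolved by some vertex of $R$; a minimal resolving set is a resolving set $R$ such that no $R\setminus\{x\}$, $x\in R$, is resolving. Boundary vertices are the vertices of degree 2 or 3. The sides of the grid are the four lines with first coordinate $0$, first coordinate $n-1$, second coordinate $0$, second coordinate $m-1$; two sides are opposite if they share no vertex. Two boundary vertices lie on opposite sides if one lies on a side and the other on the opposite side. *)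

From mathcomp Require Import all_boot.
Set Implicit Arguments. Unset Strict Implicit. Unset Printing Implicit Defensive.

Definition gvert (n m : nat) := ('I_n * 'I_m)%type.

Definition absdiff (a b : nat) : nat := (a - b) + (b - a).

Definition gdist n m (u v : gvert n m) : nat :=
  absdiff u.1 v.1 + absdiff u.2 v.2.

Definition gadj n m (u v : gvert n m) : bool := gdist u v == 1.

Definition gdeg n m (u : gvert n m) : nat := #|[set v | gadj u v]|.

Definition boundary n m (u : gvert n m) : bool := (gdeg u == 2) || (gdeg u == 3).

Definition resolves n m (w u v : gvert n m) : bool := gdist w u != gdist w v.

Definition resolving n m (R : {set gvert n m}) : Prop :=
  forall u v : gvert n m, u != v -> exists2 w, w \in R & resolves w u v.

Definition minimal_resolving n m (R : {set gvert n m}) : Prop :=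
  resolving R /\ forall x, x \in R -> ~ resolving (R :\ x).

Definition on_opposite_sides n m (u v : gvert n m) : Prop :=
  ((nat_of_ord u.1 = 0 /\ nat_of_ord v.1 = n.-1) \/
   (nat_of_ord v.1 = 0 /\ nat_of_ord u.1 = n.-1)) \/
  ((nat_of_ord u.2 = 0 /\ nat_of_ord v.2 = m.-1) \/
   (nat_of_ord v.2 = 0 /\ nat_of_ord u.2 = m.-1)).

From mathcomp Require Import all_boot zify.
Set Implicit Arguments. Unset Strict Implicit. Unset Printing Implicit Defensive.

(* The two neighbours of a corner are at equal distance from every vertex off
   the two sides through that corner, so any resolving set meets the union of
   those two sides; doing this at all four corners forces two elements on
   opposite sides.  Vertices on a side are boundary because the degree of
   (i, j) is the sum of the degrees of i and j in the two paths, each 1 or 2,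
   and equal to 1 at an end of a path. *)

Section Path.
Variable k : nat.
Implicit Types a : 'I_k.

Definition path_nbrs a : {set 'I_k} := [set i : 'I_k | absdiff a i == 1].

Lemma card_path_nbrs_le2 a : #|path_nbrs a| <= 2.
Proof.
have side_inj : {in path_nbrs a &, injective (fun i : 'I_k => (a < i)%N)}.
  move=> i j; rewrite !inE /absdiff => /eqP ai /eqP aj eq_side.
  by apply: ord_inj; move: eq_side; case: (ltnP a i); case: (ltnP a j) => // *; lia.
by rewrite -(card_in_imset side_inj) -card_bool max_card.
Qed.

Lemma card_path_nbrs_end a : (a = 0 :> nat) \/ (a = k.-1 :> nat) ->
  #|path_nbrs a| <= 1.
Proof.
move=> a_end; apply/card_le1_eqP => i j; rewrite !inE /absdiff => /eqP ai /eqP aj.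
by apply: ord_inj; have := ltn_ord i; have := ltn_ord j; lia.
Qed.

Lemma card_path_nbrs_gt0 a : 1 < k -> 0 < #|path_nbrs a|.
Proof.
move=> k_gt1; apply/card_gt0P.
have [a_lt | a_last] := ltnP a.+1 k.
  by exists (Ordinal a_lt); rewrite inE /absdiff /=; lia.
have a_prev : a.-1 < k := leq_ltn_trans (leq_pred a) (ltn_ord a).
by exists (Ordinal a_prev); rewrite inE /absdiff /=; lia.
Qed.

Definition path_end_nbr (c c' : nat) :=
  forall x : 'I_k, (x : nat) != c -> absdiff x c = (absdiff x c').+1.

Lemma path_end_nbr_first : path_end_nbr 0 1.
Proof. by move=> x; rewrite /absdiff; lia. Qed.

Lemma path_end_nbr_last : 1 < k -> path_end_nbr k.-1 k.-2.
Proof. by move=> k_gt1 x; have := ltn_ord x; rewrite /absdiff; lia. Qed.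

End Path.

Section Grid.
Variables n m : nat.
Implicit Types u v w : gvert n m.

(* Grid adjacency changes exactly one coordinate by one. *)
Lemma gdeg_path_nbrs u : gdeg u = #|path_nbrs u.1| + #|path_nbrs u.2|.
Proof.
rewrite /gdeg; have -> : [set v | gadj u v] =
    setX (path_nbrs u.1) [set u.2] :|: setX [set u.1] (path_nbrs u.2).
  apply/setP => -[i j]; rewrite !inE /gadj /gdist /= -!(inj_eq (@ord_inj _)).
  by rewrite /absdiff; lia.
have disj : setX (path_nbrs u.1) [set u.2] :&: setX [set u.1] (path_nbrs u.2) = set0.
  apply/setP => -[i j]; rewrite !inE /= -!(inj_eq (@ord_inj _)).
  by rewrite /absdiff; lia.
by rewrite cardsU disj cards0 !cardsX !cards1 muln1 mul1n subn0.
Qed.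

Lemma boundary_of_side u : 1 < n -> 1 < m ->
  [\/ u.1 = 0 :> nat, u.1 = n.-1 :> nat, u.2 = 0 :> nat | u.2 = m.-1 :> nat] ->
  boundary u.
Proof.
move=> n_gt1 m_gt1 u_side.
have := card_path_nbrs_gt0 u.1 n_gt1; have := card_path_nbrs_le2 u.1.
have := card_path_nbrs_gt0 u.2 m_gt1; have := card_path_nbrs_le2 u.2.
have one_end : #|path_nbrs u.1| <= 1 \/ #|path_nbrs u.2| <= 1.
  by case: u_side => side; [left|left|right|right]; apply: card_path_nbrs_end; auto.
rewrite /boundary gdeg_path_nbrs; lia.
Qed.

(* Both neighbours of a corner are at the same distance from any vertex
   outside the two sides through that corner. *)
Lemma resolving_corner (R : {set gvert n m}) (c1 c1' c2 c2' : nat) :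
  resolving R -> path_end_nbr n c1 c1' -> path_end_nbr m c2 c2' ->
  c1 < n -> c1' < n -> c2 < m -> c2' < m -> c1 != c1' ->
  exists2 w, w \in R & (w.1 = c1 :> nat) \/ (w.2 = c2 :> nat).
Proof.
move=> resR end1 end2 c1_lt c1'_lt c2_lt c2'_lt c1_ne.
pose u : gvert n m := (Ordinal c1_lt, Ordinal c2'_lt).
pose v : gvert n m := (Ordinal c1'_lt, Ordinal c2_lt).
have u_ne_v : u != v by apply: contraNneq c1_ne => -[->].
have [w wR res_w] := resR u v u_ne_v; exists w => //.
have [|w1] := eqVneq (w.1 : nat) c1; first by left.
have [|w2] := eqVneq (w.2 : nat) c2; first by right.
by move: res_w; rewrite /resolves /gdist /= (end1 _ w1) (end2 _ w2) addSn addnS eqxx.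
Qed.

End Grid.

Lemma opposite_pair_of_corners (T : Type) (P left right bottom top : T -> Prop)
    (w1 w2 w3 w4 : T) :
  P w1 -> P w2 -> P w3 -> P w4 ->
  left w1 \/ bottom w1 -> right w2 \/ bottom w2 ->
  left w3 \/ top w3 -> right w4 \/ top w4 ->
  exists u v, [/\ P u, P v & (left u /\ right v) \/ (bottom u /\ top v)].
Proof.
move=> P1 P2 P3 P4 [l1|b1] s2 s3 [r4|t4].
- by exists w1, w4; split; auto.
- by case: s2 => [r2|b2]; [exists w1, w2 | exists w2, w4]; split; auto.
- by case: s3 => [l3|t3]; [exists w3, w4 | exists w1, w3]; split; auto.
- by exists w1, w4; split; auto.
Qed.

Theorem proposition2 (n m : nat) (hn : 3 <= n) (hm : 3 <= m)
  (R : {set gvert n m}) :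
  minimal_resolving R ->
  exists u v, [/\ u \in R, v \in R, boundary u, boundary v
                & on_opposite_sides u v].
Proof.
move=> [resR _]; have n_gt1 : 1 < n by lia. have m_gt1 : 1 < m by lia.
have first_n := @path_end_nbr_first n; have last_n := path_end_nbr_last n_gt1.
have first_m := @path_end_nbr_first m; have last_m := path_end_nbr_last m_gt1.
have [w1 w1R s1] : exists2 w, w \in R & (w.1 = 0 :> nat) \/ (w.2 = 0 :> nat).
  by apply: (resolving_corner resR first_n first_m); lia.
have [w2 w2R s2] : exists2 w, w \in R & (w.1 = n.-1 :> nat) \/ (w.2 = 0 :> nat).
  by apply: (resolving_corner resR last_n first_m); lia.
have [w3 w3R s3] : exists2 w, w \in R & (w.1 = 0 :> nat) \/ (w.2 = m.-1 :> nat).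
  by apply: (resolving_corner resR first_n last_m); lia.
have [w4 w4R s4] : exists2 w, w \in R & (w.1 = n.-1 :> nat) \/ (w.2 = m.-1 :> nat).
  by apply: (resolving_corner resR last_n last_m); lia.
have [u [v [uR vR opp]]] := opposite_pair_of_corners
  (P := fun w => w \in R) (left := fun w => w.1 = 0 :> nat)
  (right := fun w => w.1 = n.-1 :> nat) (bottom := fun w => w.2 = 0 :> nat)
  (top := fun w => w.2 = m.-1 :> nat) w1R w2R w3R w4R s1 s2 s3 s4.
have side_bnd := boundary_of_side n_gt1 m_gt1.
case: opp => -[u_side v_side]; exists u, v; split => //.
- exact: side_bnd (Or41 _ _ _ u_side).
- exact: side_bnd (Or42 _ _ _ v_side).
- by left; left.
- exact: side_bnd (Or43 _ _ _ u_side).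
- exact: side_bnd (Or44 _ _ _ v_side).
- by right; left.
Qed.
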